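(* In the setting of the context (with $p>L$), for every $t\ge0$ the iterates of Smoothed-GDA satisfy $$d(y^{t+1},z^{t+1})-d(y^t,z^t)\ge\langle\nabla_yK(x(y^t,z^t),z^t;y^t),\,y^{t+1}-y^t\rangle-\frac{L_d}{2}\|y^t-y^{t+1}\|^2+\frac p2(z^{t+1}-z^t)^T\big(z^{t+1}+z^t-2x(y^{t+1},z^{t+1})\big),$$ where $L_d=L+L\sigma_2$, $\sigma_2=\frac{2(p+L)}{p-L}$, and $\nabla_yK(x(y^t,z^t),z^t;y^t)=\nabla_yd(y^t,z^t)$.
   Context: $X\subseteq\mathbb{R}^n$ nonempty closed convex, $Y\subseteq\mathbb{R}^m$ nonempty closed convex compact, $f$ continuously differentiable with $f(x,\cdot)$ concave, $\nabla_xf,\nabla_yf$ $L$-Lipschitz. $K(x,z;y)=f(x,y)+\frac p2\|x-z\|^2$, $x(y,z)=\arg\min_{x\in X}K(x,z;y)$, $d(y,z)=\min_{x\in X}K(x,z;y)$. Smoothed-GDA with $c,\alpha>0$, $0<\beta\le1$: $x^{t+1}=P_X(x^t-c\nabla_xK(x^t,z^t;y^t))$, $y^{t+1}=P_Y(y^t+\alpha\nabla_yK(x^{t+1},z^t;y^t))$, $z^{t+1}=z^t+\beta(x^{t+1}-z^t)$ ($P_S$ Euclidean projection). *)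

From HB Require Import structures.
From mathcomp Require Import all_boot all_order all_algebra.
From mathcomp Require Import all_classical all_reals all_analysis.
Set Implicit Arguments. Unset Strict Implicit. Unset Printing Implicit Defensive.
Import Order.TTheory GRing.Theory Num.Theory.
Import numFieldNormedType.Exports.
Local Open Scope classical_set_scope.
Local Open Scope ring_scope.

Section Defs.
Variable R : realType.

Definition dotp (k : nat) (u v : 'rV[R]_k) : R := \sum_(i < k) u ord0 i * v ord0 i.
Definition enorm (k : nat) (u : 'rV[R]_k) : R := Num.sqrt (dotp u u).

(* Euclidean projection onto S (well defined: S nonempty closed convex) *)
Definition eproj (k : nat) (S : set 'rV[R]_k) (v : 'rV[R]_k) : 'rV[R]_k :=
  get [set u | S u /\ forall w, S w -> enorm (v - u) <= enorm (v - w)].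

Definition Kfun (n m : nat) (f : 'rV[R]_n -> 'rV[R]_m -> R) (p : R)
  (x z : 'rV[R]_n) (y : 'rV[R]_m) : R :=
  f x y + p / 2 * enorm (x - z) ^+ 2.

(* x(y,z) = argmin_{x in X} K(x,z;y)  (a chosen minimizer; unique when p > L) *)
Definition xopt (n m : nat) (f : 'rV[R]_n -> 'rV[R]_m -> R) (p : R)
  (X : set 'rV[R]_n) (y : 'rV[R]_m) (z : 'rV[R]_n) : 'rV[R]_n :=
  get [set x | X x /\ forall x', X x' -> Kfun f p x z y <= Kfun f p x' z y].

Definition dfun (n m : nat) (f : 'rV[R]_n -> 'rV[R]_m -> R) (p : R)
  (X : set 'rV[R]_n) (y : 'rV[R]_m) (z : 'rV[R]_n) : R :=
  Kfun f p (xopt f p X y z) z y.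

Definition gradxK (n m : nat) (gx : 'rV[R]_n -> 'rV[R]_m -> 'rV[R]_n) (p : R)
  (x z : 'rV[R]_n) (y : 'rV[R]_m) : 'rV[R]_n := gx x y + p *: (x - z).
Definition gradyK (n m : nat) (gy : 'rV[R]_n -> 'rV[R]_m -> 'rV[R]_m)
  (x z : 'rV[R]_n) (y : 'rV[R]_m) : 'rV[R]_m := gy x y.

End Defs.

(* Write d(y', z') - d(y, z) = [d(y', z') - d(y', z)] + [d(y', z) - d(y, z)].
   Testing the problem at z with x(y, z') bounds the first bracket below by the
   p/2 term.  For the second, testing the problem at y with x' := x(y', z) and
   using concavity of f(x', .) gives the lower bound <grad_y f(x', y'), y' - y>;
   replacing that gradient by grad_y f(x(y, z), y) costs at most
   L |(x' - x, y' - y)| |y' - y|.  Adding the first-order optimality conditions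
   of x(y, z) and x(y', z) gives p |x' - x| <= L |(x' - x, y' - y)|, hence
   |(x' - x, y' - y)| <= p / sqrt(p^2 - L^2) |y' - y| <= (1 + sigma2) / 2 |y' - y|.
   The resulting two-sided quadratic bounds on d(., z) around y also yield
   Danskin's formula for its gradient.  Nothing about the Smoothed-GDA updates
   is used: the estimate holds for any two pairs (y, z), (y', z'). *)

From HB Require Import structures.
From mathcomp Require Import all_boot all_order all_algebra.
From mathcomp Require Import all_classical all_reals all_analysis.
From mathcomp Require Import ring lra.
Import Order.TTheory GRing.Theory Num.Theory.
Import numFieldNormedType.Exports.
Local Open Scope classical_set_scope.
Local Open Scope ring_scope.

Set Implicit Arguments. Unset Strict Implicit. Unset Printing Implicit Defensive.

Section Euclidean.
Variables (R : realType) (k : nat).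
Implicit Types (a : R) (u v w : 'rV[R]_k).

Lemma dotpC u v : dotp u v = dotp v u.
Proof. by apply: eq_bigr => i _; rewrite mulrC. Qed.

Lemma dotpDl u v w : dotp (u + v) w = dotp u w + dotp v w.
Proof. by rewrite /dotp -big_split; apply: eq_bigr => i _; rewrite !mxE mulrDl. Qed.

Lemma dotpZl a u v : dotp (a *: u) v = a * dotp u v.
Proof. by rewrite /dotp mulr_sumr; apply: eq_bigr => i _; rewrite !mxE mulrA. Qed.

Lemma dotpNl u v : dotp (- u) v = - dotp u v.
Proof. by rewrite -scaleN1r dotpZl mulN1r. Qed.

Lemma dotpBl u v w : dotp (u - v) w = dotp u w - dotp v w.
Proof. by rewrite dotpDl dotpNl. Qed.

Lemma dotpDr u v w : dotp u (v + w) = dotp u v + dotp u w.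
Proof. by rewrite dotpC dotpDl !(dotpC u). Qed.

Lemma dotpZr a u v : dotp u (a *: v) = a * dotp u v.
Proof. by rewrite dotpC dotpZl dotpC. Qed.

Lemma dotpNr u v : dotp u (- v) = - dotp u v.
Proof. by rewrite dotpC dotpNl dotpC. Qed.

Lemma dotpBr u v w : dotp u (v - w) = dotp u v - dotp u w.
Proof. by rewrite dotpDr dotpNr. Qed.

Lemma dotp0r u : dotp u 0 = 0.
Proof. by rewrite -(scale0r 0) dotpZr mul0r. Qed.

Lemma dotpp_ge0 u : 0 <= dotp u u.
Proof. by apply: sumr_ge0 => i _; rewrite -expr2 sqr_ge0. Qed.

Lemma dotpp_eq0 u : (dotp u u == 0) = (u == 0).
Proof.
apply/idP/eqP => [|->]; last by rewrite dotp0r.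
rewrite psumr_eq0 => [/allP uu0|i _]; last by rewrite -expr2 sqr_ge0.
apply/matrixP => i j; rewrite (ord1 i) mxE.
by have := uu0 j (mem_index_enum _); rewrite -expr2 sqrf_eq0 => /eqP.
Qed.

Lemma enorm_ge0 u : 0 <= enorm u.
Proof. exact: sqrtr_ge0. Qed.

Lemma enorm_sqr u : enorm u ^+ 2 = dotp u u.
Proof. by rewrite sqr_sqrtr // dotpp_ge0. Qed.

Lemma enorm_gt0 u : (0 < enorm u) = (u != 0).
Proof. by rewrite sqrtr_gt0 lt_def dotpp_ge0 dotpp_eq0 andbT. Qed.

Lemma enorm0 : enorm (0 : 'rV[R]_k) = 0.
Proof. by rewrite /enorm dotp0r sqrtr0. Qed.

Lemma enormZ a u : enorm (a *: u) = `|a| * enorm u.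
Proof. by rewrite /enorm dotpZl dotpZr mulrA -expr2 sqrtrM ?sqr_ge0 // sqrtr_sqr. Qed.

Lemma enormN u : enorm (- u) = enorm u.
Proof. by rewrite -scaleN1r enormZ normrN1 mul1r. Qed.

Lemma enormB u v : enorm (u - v) = enorm (v - u).
Proof. by rewrite -enormN opprB. Qed.

Lemma enormD_sqr u v : enorm (u + v) ^+ 2 = enorm u ^+ 2 + 2 * dotp u v + enorm v ^+ 2.
Proof. by rewrite !enorm_sqr dotpDl !dotpDr (dotpC v u); ring. Qed.

Lemma enorm_sqrB_sqrB u v w :
  enorm (u - w) ^+ 2 - enorm (u - v) ^+ 2 = dotp (w - v) (w + v - 2%:R *: u).
Proof.
rewrite !enorm_sqr !(dotpBl, dotpBr, dotpDl, dotpDr, dotpNr, dotpZl, dotpZr).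
by rewrite (dotpC w u) (dotpC v u) (dotpC v w); ring.
Qed.

Lemma dotp_le u v : dotp u v <= enorm u * enorm v.
Proof.
have [->|v0] := eqVneq v 0; first by rewrite dotp0r enorm0 mulr0.
have vv_gt0 : 0 < dotp v v by rewrite lt_def dotpp_eq0 v0 dotpp_ge0.
have [uv_le0|uv_gt0] := lerP (dotp u v) 0.
  by rewrite (le_trans uv_le0) // mulr_ge0 ?enorm_ge0.
(* expand [0 <= |u - t v|^2] at the minimiser [t = <u, v> / |v|^2] *)
have := dotpp_ge0 (u - (dotp u v / dotp v v) *: v).
rewrite !(dotpBl, dotpBr, dotpZl, dotpZr) (dotpC v u) divfK ?gt_eqF //.
rewrite subrr mulr0 subr0 subr_ge0 mulrAC ler_pdivrMr // => uv_sqr.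
rewrite -(ger0_norm (ltW uv_gt0)) -sqrtr_sqr /enorm -sqrtrM ?dotpp_ge0 //.
by rewrite ler_sqrt ?mulr_ge0 ?dotpp_ge0 // expr2.
Qed.

Lemma norm_dotp_le u v : `|dotp u v| <= enorm u * enorm v.
Proof. by rewrite ler_norml dotp_le andbT lerNl -dotpNl -(enormN u) dotp_le. Qed.

Lemma coord_le_mx_norm u i : `|u ord0 i| <= `|u|.
Proof.
rewrite -[leRHS]/(mx_norm u) mx_normrE; apply/bigmax_geP; right.
by exists (ord0, i).
Qed.

Lemma mx_norm_le_enorm u : `|u| <= enorm u.
Proof.
have [->|] := eqVneq u 0; first by rewrite normr0 enorm0.
rewrite -normr_eq0 -[`|u|]/(mx_norm u) => /mx_norm_neq0 [[i j] ->].
rewrite (ord1 i) -(sqrtr_sqr (u ord0 j)) ler_sqrt ?dotpp_ge0 //.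
rewrite /dotp (bigD1 j) //= -expr2 lerDl.
by apply: sumr_ge0 => l _; rewrite -expr2 sqr_ge0.
Qed.

Lemma enorm_sqr_le u : enorm u ^+ 2 <= k%:R * `|u| ^+ 2.
Proof.
have -> : k%:R * `|u| ^+ 2 = \sum_(i < k) `|u| ^+ 2.
  by rewrite sumr_const card_ord mulr_natl.
rewrite enorm_sqr.
apply: ler_sum => i _; rewrite -expr2 -real_normK ?num_real //.
by rewrite lerXn2r ?nnegrE ?normr_ge0 // coord_le_mx_norm.
Qed.

Lemma norm_dotp_le_mx_norm u v : `|dotp u v| <= (\sum_i `|u ord0 i|) * `|v|.
Proof.
rewrite mulr_suml (le_trans (ler_norm_sum _ _ _)) //.
by apply: ler_sum => i _; rewrite normrM ler_wpM2l ?coord_le_mx_norm.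
Qed.

End Euclidean.

Section DotpLinear.
Variables (R : realType) (k : nat) (a : 'rV[R]_k).

Definition dotl : 'rV[R]_k -> R := dotp a.

Lemma dotl_is_linear : linear dotl.
Proof. by move=> c u v; rewrite /dotl dotpDr dotpZr. Qed.

HB.instance Definition _ :=
  GRing.isLinear.Build R 'rV[R]_k R *:%R dotl dotl_is_linear.

Lemma dotl_continuous : continuous dotl.
Proof.
apply: bounded_linear_continuous; rewrite /bounded_near.
near=> M; near=> v; rewrite /= -/(dotl v).
apply: le_trans (norm_dotp_le_mx_norm a v) _.
apply: le_trans (_ : _ <= \sum_i `|a ord0 i|) _.
  by rewrite ler_piMr ?sumr_ge0 //; near: v; apply: nbhs0_le.
by near: M; apply: nbhs_pinfty_ge; exact: num_real.
Unshelve. all: by end_near.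
Qed.

End DotpLinear.

Section Remainders.
Variables (R : realType) (V : normedModType R).

Lemma differentiable_of_sqr_remainder (g : V -> R) x (l : {linear V -> R}) C :
  continuous l -> (forall u, `|g (x + u) - g x - l u| <= C * `|u| ^+ 2) ->
  differentiable g x /\ 'd g x = l :> (V -> R).
Proof.
move=> l_cont g_rem.
have g_expansion : g \o shift x = cst (g x) + l +o_ 0 id.
  apply/eqaddoP => e e_gt0; near=> u.
  have -> : (g \o shift x - (cst (g x) + l)) u = g (x + u) - g x - l u.
    by rewrite -[(_ - _) u]/(g (u + x) - (g x + l u)) [u + x]addrC opprD addrA.
  apply: le_trans (g_rem u) _; rewrite expr2 mulrA ler_wpM2r //.
  apply: le_trans (ler_wpM2r (normr_ge0 _) (ler_norm C)) _.
  have C1_gt0 : 0 < `|C| + 1 by rewrite ltr_pwDr.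
  apply: le_trans (ler_wpM2r (normr_ge0 _) (ler_wpDr ler01 (lexx `|C|))) _.
  rewrite mulrC -ler_pdivlMr //.
  by near: u; apply: nbhs0_le; rewrite divr_gt0.
have dg := diff_unique l_cont g_expansion.
by split=> //; apply/diff_locallyP; rewrite dg.
Unshelve. all: by end_near.
Qed.

Lemma is_derive_quadratic (a b s : R) :
  is_derive s 1 (fun t : R => a * (t * t) + b * t) (2 * a * s + b).
Proof.
have dsqr : is_derive s 1 (fun t : R => t * t) (s + s).
  have := @is_deriveM R R id id s 1 1 1 (is_derive_id _ _) (is_derive_id _ _).
  by rewrite /= !scaler1.
have := is_deriveD (is_deriveZ a dsqr) (is_deriveZ b (is_derive_id s 1)).
by move=> d; apply: is_derive_eq; rewrite -[LHS]/(a * (s + s) + b * 1); ring.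
Qed.

(* [phi s - D s + K s^2 / 2] increases and [phi s - D s - K s^2 / 2] decreases on [0, 1]. *)
Lemma taylor1_remainder_le (phi phi' : R -> R) (D K : R) :
  (forall s : R, is_derive s 1 phi (phi' s)) ->
  (forall s : R, 0 <= s -> s <= 1 -> `|phi' s - D| <= K * s) ->
  `|phi 1 - phi 0 - D| <= K / 2.
Proof.
move=> dphi phi'_near.
pose psi a b t := phi t + (a * (t * t) + b * t).
have dpsi (a b t : R) : is_derive t 1 (psi a b) (phi' t + (2 * a * t + b)).
  exact: is_deriveD (dphi t) (is_derive_quadratic a b t).
have psi_cont (a b : R) : {within `[0, 1], continuous psi a b}.
  by apply: derivable_within_continuous => t _; have [] := dpsi a b t.
have psi_deriv (a b t : R) : derive1 (psi a b) t = phi' t + (2 * a * t + b).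
  by rewrite derive1E; apply: derive_val.
have up : psi (K / 2) (- D) 0 <= psi (K / 2) (- D) 1.
  apply: (ger0_derive1_ndecr _ _ (psi_cont _ _)) => // t.
  rewrite in_itv /= psi_deriv => /andP[t0 t1].
  by have := phi'_near t (ltW t0) (ltW t1); rewrite ler_norml => /andP[? _]; lra.
have down : psi (- K / 2) (- D) 1 <= psi (- K / 2) (- D) 0.
  apply: (ler0_derive1_le_cc _ _ (psi_cont _ _)); rewrite ?in_itv /= ?ler01 ?lexx //.
  move=> t; rewrite in_itv /= psi_deriv => /andP[t0 t1].
  by have := phi'_near t (ltW t0) (ltW t1); rewrite ler_norml => /andP[_ ?]; lra.
by rewrite /psi in up down; rewrite ler_norml; apply/andP; split; lra.
Qed.

Lemma is_derive_along (F : V -> R) a v s : differentiable F (a + s *: v) ->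
  is_derive s 1 (fun s => F (a + s *: v)) ('d F (a + s *: v) v).
Proof.
move=> dF.
have dline : is_diff s (fun s : R => a + s *: v) (fun h => 0 + h *: v).
  have -> : (fun s : R => a + s *: v) = cst a + *:%R^~ v by [].
  have -> : (fun h : R => 0 + h *: v) = 0 + *:%R^~ v by [].
  exact: is_diffD.
have dcomp := is_diff_comp dline (differentiableP dF).
apply: DeriveDef; first exact/diff_derivable/ex_diff.
by rewrite deriveE ?diff_val /= ?add0r ?scale1r //; apply: ex_diff.
Qed.

Lemma taylor_remainder_le (F : V -> R) (dF : V -> V -> R) (a v : V) (K : R) :
  (forall w, differentiable F w) -> (forall w, 'd F w v = dF w v) ->
  (forall s : R, 0 <= s -> s <= 1 -> `|dF (a + s *: v) v - dF a v| <= K * s) ->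
  `|F (a + v) - F a - dF a v| <= K / 2.
Proof.
move=> F_diff dFE dF_near.
have := @taylor1_remainder_le (fun s => F (a + s *: v))
  (fun s => 'd F (a + s *: v) v) (dF a v) K.
rewrite scale1r scale0r addr0; apply=> [s|s s0 s1].
  exact: is_derive_along.
by rewrite dFE; apply: dF_near.
Qed.

End Remainders.

Lemma differentiable_of_enorm_remainder (R : realType) (k : nat)
    (g : 'rV[R]_k -> R) x a C :
  (forall u, `|g (x + u) - g x - dotp a u| <= C * enorm u ^+ 2) ->
  differentiable g x /\ forall v, 'd g x v = dotp a v.
Proof.
move=> g_rem.
have [|dg dgE] :=
  @differentiable_of_sqr_remainder _ _ g x (dotl a) (`|C| * k%:R) (@dotl_continuous _ _ a).
  move=> u; apply: le_trans (g_rem u) _; rewrite -mulrA.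
  apply: le_trans (ler_wpM2r (sqr_ge0 _) (ler_norm C)) _.
  by rewrite ler_wpM2l ?enorm_sqr_le.
by split=> // v; rewrite dgE.
Qed.

Lemma ler_of_linear_slack (R : realType) (a b c : R) :
  (forall l, 0 < l -> l <= 1 -> a <= b + c * l) -> a <= b.
Proof.
move=> slack; apply/ler_addgt0Pr => e e_gt0.
have c1_gt0 : 0 < `|c| + 1 by rewrite ltr_pwDr.
pose l := Num.min 1 (e / (`|c| + 1)).
have l_gt0 : 0 < l by rewrite lt_min ltr01 divr_gt0.
have l_le1 : l <= 1 by rewrite ge_min lexx.
apply: le_trans (slack l l_gt0 l_le1) _; rewrite lerD2l.
apply: le_trans (_ : (`|c| + 1) * l <= e).
  by apply: ler_wpM2r; [exact: ltW | rewrite (le_trans (ler_norm c)) ?lerDl].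
by rewrite mulrC -ler_pdivlMr // ge_min lexx orbT.
Qed.

Lemma convex_set_segment (R : realType) (k : nat) (X : set 'rV[R]_k) x y (s : R) :
  convex_set X -> X x -> X y -> 0 <= s -> s <= 1 -> X (y + s *: (x - y)).
Proof.
move=> X_convex Xx Xy s0 s1.
have -> : y + s *: (x - y) = s *: x + (1 - s) *: y.
  by rewrite scalerBr scalerBl scale1r addrCA.
by have := X_convex x y (Itv01 s0 s1) (mem_set Xx) (mem_set Xy); rewrite inE.
Qed.

Lemma sqrt_add_sqr_le (R : realType) (L p a b : R) : 0 <= L -> L < p -> 0 <= a ->
  p * a ^+ 2 <= L * Num.sqrt (a ^+ 2 + b ^+ 2) * a ->
  Num.sqrt (a ^+ 2 + b ^+ 2) <= (1 + 2 * (p + L) / (p - L)) / 2 * `|b|.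
Proof.
move=> L_ge0 L_lt_p a_ge0 pa_le.
set S := Num.sqrt _; set c := (1 + _) / 2.
have pL_gt0 : 0 < p - L by rewrite subr_gt0.
have p_gt0 : 0 < p by apply: le_lt_trans L_lt_p.
have S_ge0 : 0 <= S by apply: sqrtr_ge0.
have SS : S ^+ 2 = a ^+ 2 + b ^+ 2 by rewrite sqr_sqrtr // addr_ge0 ?sqr_ge0.
have S_le : (p ^+ 2 - L ^+ 2) * S ^+ 2 <= p ^+ 2 * b ^+ 2.
  have [a0|a_neq0] := eqVneq a 0.
    by rewrite SS a0 expr0n add0r ler_wpM2r ?sqr_ge0 // gerDl oppr_le0 sqr_ge0.
  have a_pos : 0 < a by rewrite lt_def a_neq0.
  have pa : p * a <= L * S by rewrite -(ler_pM2r a_pos) -mulrA -expr2.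
  have := ler_pM (mulr_ge0 (ltW p_gt0) a_ge0) (mulr_ge0 (ltW p_gt0) a_ge0) pa pa.
  by rewrite -!expr2 !exprMn SS; lra.
have c_eq : c = (3 * p + L) / (2 * (p - L)) by rewrite /c; field; rewrite gt_eqF.
have c_le : p ^+ 2 <= c ^+ 2 * (p ^+ 2 - L ^+ 2).
  rewrite c_eq expr_div_n mulrAC ler_pdivlMr ?exprn_gt0 ?mulr_gt0 //.
  (* the difference of the two sides is (p - L) (5p^3 + 19p^2L + 7pL^2 + L^3) *)
  have : 0 <= (p - L) * (5 * p ^+ 3 + 19 * p ^+ 2 * L + 7 * p * L ^+ 2 + L ^+ 3).
    apply: mulr_ge0; first exact: ltW.
    by rewrite !addr_ge0 ?mulr_ge0 ?exprn_ge0 // ltW.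
  lra.
have pL2_gt0 : 0 < p ^+ 2 - L ^+ 2.
  by rewrite subr_gt0 ltr_pXn2r ?nnegrE // ltW.
have c_ge0 : 0 <= c by rewrite c_eq divr_ge0 //; lra.
have cb_ge0 : 0 <= c * `|b| by rewrite mulr_ge0.
rewrite -(@ler_pXn2r _ 2) ?nnegrE // exprMn real_normK ?num_real //.
rewrite -(ler_pM2l pL2_gt0); have := ler_wpM2r (sqr_ge0 b) c_le; lra.
Qed.

Lemma pairD (R : realType) (U W : normedModType R) (a c : U) (b d : W) :
  (a, b) + (c, d) = (a + c, b + d).
Proof. by []. Qed.

Section SmoothedGDA.
Variables (R : realType) (n m : nat) (f : 'rV[R]_n -> 'rV[R]_m -> R)
  (gx : 'rV[R]_n -> 'rV[R]_m -> 'rV[R]_n) (gy : 'rV[R]_n -> 'rV[R]_m -> 'rV[R]_m)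
  (L p : R) (X : set 'rV[R]_n).

Local Notation F := (fun w : 'rV[R]_n * 'rV[R]_m => f w.1 w.2).

Hypothesis f_diff : forall x y, differentiable F (x, y) /\
  forall u v, 'd F (x, y) (u, v) = dotp (gx x y) u + dotp (gy x y) v.
Hypothesis f_concave : forall x (y1 y2 : 'rV[R]_m) (l : R), 0 <= l -> l <= 1 ->
  l * f x y1 + (1 - l) * f x y2 <= f x (l *: y1 + (1 - l) *: y2).
Hypothesis gx_lip : forall x y x' y',
  enorm (gx x y - gx x' y') <= L * Num.sqrt (enorm (x - x') ^+ 2 + enorm (y - y') ^+ 2).
Hypothesis gy_lip : forall x y x' y',
  enorm (gy x y - gy x' y') <= L * Num.sqrt (enorm (x - x') ^+ 2 + enorm (y - y') ^+ 2).

Lemma F_differentiable w : differentiable F w.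
Proof. by case: w => x y; case: (f_diff x y). Qed.

Definition dF (w v : 'rV[R]_n * 'rV[R]_m) : R :=
  dotp (gx w.1 w.2) v.1 + dotp (gy w.1 w.2) v.2.

Lemma diffF w v : 'd F w v = dF w v.
Proof. by case: w v => [x y] [u v]; rewrite (f_diff x y).2. Qed.

Lemma f_taylor_x x y u :
  `|f (x + u) y - f x y - dotp (gx x y) u| <= L / 2 * enorm u ^+ 2.
Proof.
have := @taylor_remainder_le _ _ F dF (x, y) (u, 0) (L * enorm u ^+ 2)
  F_differentiable (fun w => diffF w (u, 0)).
rewrite pairD [y + 0]addr0 -[(x + u, y).1]/(x + u) -[(x + u, y).2]/y -[(x, y).1]/x -[(x, y).2]/y.
rewrite /dF /= dotp0r addr0 mulrAC; apply=> s s0 s1.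
rewrite scaler0 addr0 dotp0r addr0 -dotpBl.
apply: le_trans (norm_dotp_le _ _) _.
apply: le_trans (ler_wpM2r (enorm_ge0 _) (gx_lip _ _ _ _)) _.
rewrite addrAC subrr add0r subrr enorm0 expr0n addr0 sqrtr_sqr enormZ.
by rewrite !ger0_norm ?mulr_ge0 ?enorm_ge0 //; lra.
Qed.

Lemma f_taylor_y x y v :
  `|f x (y + v) - f x y - dotp (gy x y) v| <= L / 2 * enorm v ^+ 2.
Proof.
have := @taylor_remainder_le _ _ F dF (x, y) (0, v) (L * enorm v ^+ 2)
  F_differentiable (fun w => diffF w (0, v)).
rewrite pairD [x + 0]addr0 -[(x, y + v).1]/x -[(x, y + v).2]/(y + v) -[(x, y).1]/x -[(x, y).2]/y.
rewrite /dF /= dotp0r add0r mulrAC; apply=> s s0 s1.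
rewrite scaler0 addr0 dotp0r add0r -dotpBl.
apply: le_trans (norm_dotp_le _ _) _.
apply: le_trans (ler_wpM2r (enorm_ge0 _) (gy_lip _ _ _ _)) _.
rewrite subrr enorm0 expr0n add0r addrAC subrr add0r sqrtr_sqr enormZ.
by rewrite !ger0_norm ?mulr_ge0 ?enorm_ge0 //; lra.
Qed.

Lemma Kfun_taylor x u z y :
  Kfun f p (x + u) z y - Kfun f p x z y - dotp (gradxK gx p x z y) u =
  (f (x + u) y - f x y - dotp (gx x y) u) + p / 2 * enorm u ^+ 2.
Proof.
by rewrite /Kfun /gradxK (addrAC x u) (enormD_sqr (x - z)) (dotpDl (gx x y)) dotpZl; field.
Qed.

Lemma Kfun_ge x u z y :
  Kfun f p x z y + dotp (gradxK gx p x z y) u + (p - L) / 2 * enorm u ^+ 2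
  <= Kfun f p (x + u) z y.
Proof.
have := f_taylor_x x y u; rewrite ler_norml => /andP[+ _].
by have := Kfun_taylor x u z y; lra.
Qed.

Lemma Kfun_le x u z y :
  Kfun f p (x + u) z y
  <= Kfun f p x z y + dotp (gradxK gx p x z y) u + (p + L) / 2 * enorm u ^+ 2.
Proof.
have := f_taylor_x x y u; rewrite ler_norml => /andP[_].
by have := Kfun_taylor x u z y; lra.
Qed.

Lemma Kfun_continuous z y : continuous (fun x => Kfun f p x z y).
Proof.
move=> x; have [u|dK _] := @differentiable_of_enorm_remainder _ _
  (fun x => Kfun f p x z y) x (gradxK gx p x z y) ((`|p| + L) / 2).
  rewrite Kfun_taylor; apply: le_trans (ler_normD _ _) _.
  rewrite [`|p / 2 * _|]normrM [`|enorm u ^+ 2|]ger0_norm ?sqr_ge0 //.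
  rewrite normf_div [`|2|]ger0_norm //.
  by have := f_taylor_x x y u; lra.
exact: differentiable_continuous.
Qed.

Hypotheses (X_nonempty : exists x0, X x0) (X_closed : closed X)
  (X_convex : convex_set X) (L_lt_p : L < p).

Local Notation xo := (xopt f p X).
Local Notation dd := (dfun f p X).

Lemma Kfun_ge_far y z x0 x :
  2 * enorm (gradxK gx p x0 z y) / (p - L) <= enorm (x - x0) ->
  Kfun f p x0 z y <= Kfun f p x z y.
Proof.
have pL_gt0 : 0 < p - L by rewrite subr_gt0.
rewrite ler_pdivrMr // -subr_ge0 => far.
have := Kfun_ge x0 (x - x0) z y; rewrite subrKC.
have := norm_dotp_le (gradxK gx p x0 z y) (x - x0); rewrite ler_norml => /andP[+ _].
have := mulr_ge0 (enorm_ge0 (x - x0)) far.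
set e := enorm (x - x0); set G := enorm _; set g := dotp _ _; nra.
Qed.

Lemma xopt_exists y z :
  exists x, X x /\ forall x', X x' -> Kfun f p x z y <= Kfun f p x' z y.
Proof.
case: X_nonempty => x0 Xx0.
pose r := 2 * enorm (gradxK gx p x0 z y) / (p - L) + 1.
have r_gt0 : 0 < r.
  by rewrite ltr_pwDr // divr_ge0 ?mulr_ge0 ?enorm_ge0 // subr_ge0 ltW.
pose A := X `&` closed_ball x0 r.
have A_compact : compact A.
  apply: bounded_closed_compact; last by apply: closedI => //; exact: closed_ball_closed.
  exists (`|x0| + r); split; first exact: num_real.
  move=> M M_gt v [_ Av]; apply: ltW; apply: le_lt_trans M_gt.
  have -> : v = x0 - (x0 - v) by rewrite opprB addrC subrK.
  apply: le_trans (ler_normB _ _) _; rewrite lerD2l.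
  by rewrite (closed_ballE _ r_gt0) /closed_ball_ /= in Av.
have Ax0 : A x0 by split => //; exact: closed_ballxx.
have [c /set_mem[Xc _] c_min] := compact_EVT_min (ex_intro _ x0 Ax0) A_compact
  (continuous_subspaceT (@Kfun_continuous z y)).
exists c; split => // x Xx; have [Ax|nAx] := pselect (A x); first exact/c_min/mem_set.
have far : r < enorm (x - x0).
  rewrite ltNge; apply/negP => near_x; apply: nAx; split=> //.
  rewrite (closed_ballE _ r_gt0) /closed_ball_ /= distrC.
  exact: le_trans (mx_norm_le_enorm _) near_x.
apply: le_trans (c_min _ (mem_set Ax0)) _; apply: Kfun_ge_far.
by rewrite /r in far; lra.
Qed.

Lemma xoptP y z :
  X (xo y z) /\ forall x, X x -> Kfun f p (xo y z) z y <= Kfun f p x z y.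
Proof. exact: (getPex (xopt_exists y z)). Qed.

Lemma xopt_first_order y z x :
  X x -> 0 <= dotp (gradxK gx p (xo y z) z y) (x - xo y z).
Proof.
move=> Xx; have [Xxo xo_min] := xoptP y z.
rewrite -oppr_le0; apply: (@ler_of_linear_slack _ _ _ ((p + L) / 2 * enorm (x - xo y z) ^+ 2)).
move=> l l_gt0 l_le1; rewrite -(ler_pM2r l_gt0).
have := xo_min _ (convex_set_segment X_convex Xx Xxo (ltW l_gt0) l_le1).
have := Kfun_le (xo y z) (l *: (x - xo y z)) z y.
rewrite dotpZr enormZ (ger0_norm (ltW l_gt0)) exprMn.
set g := dotp _ _; set e := enorm _ ^+ 2; nra.
Qed.

(* The two first-order conditions, added up, make [x |-> grad_x K] strongly
   monotone; its Lipschitz continuity in [(x, y)] then controls the x-move. *)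
Lemma xopt_move_le y1 y2 z :
  p * enorm (xo y1 z - xo y2 z) ^+ 2
  <= L * Num.sqrt (enorm (xo y1 z - xo y2 z) ^+ 2 + enorm (y1 - y2) ^+ 2)
       * enorm (xo y1 z - xo y2 z).
Proof.
have [X1 _] := xoptP y1 z; have [X2 _] := xoptP y2 z.
have := xopt_first_order y1 z X2; have := xopt_first_order y2 z X1.
rewrite /gradxK -[xo y2 z - xo y1 z]opprB dotpNr !dotpDl !dotpZl.
have := ler_wpM2r (enorm_ge0 (xo y1 z - xo y2 z)) (gx_lip (xo y1 z) y1 (xo y2 z) y2).
have := norm_dotp_le (gx (xo y1 z) y1 - gx (xo y2 z) y2) (xo y1 z - xo y2 z).
rewrite dotpBl ler_norml => /andP[+ _].
have -> : enorm (xo y1 z - xo y2 z) ^+ 2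
        = dotp (xo y1 z - z) (xo y1 z - xo y2 z) - dotp (xo y2 z - z) (xo y1 z - xo y2 z).
  by rewrite -dotpBl enorm_sqr opprB addrA subrK.
lra.
Qed.

Local Notation kappa := ((1 + 2 * (p + L) / (p - L)) / 2).

Lemma lip_const_ge0 (y1 y2 : 'rV[R]_m) : y1 != y2 -> 0 <= L.
Proof.
rewrite -subr_eq0 -enorm_gt0 => y12_gt0.
have := gy_lip 0 y1 0 y2; rewrite subrr enorm0 expr0n add0r sqrtr_sqr.
by rewrite ger0_norm ?enorm_ge0 // => /(le_trans (enorm_ge0 _)); rewrite pmulr_lge0.
Qed.

Lemma f_concave_grad x y1 y2 : f x y1 - f x y2 <= dotp (gy x y2) (y1 - y2).
Proof.
apply: (@ler_of_linear_slack _ _ _ (L / 2 * enorm (y1 - y2) ^+ 2)) => l l_gt0 l_le1.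
rewrite -(ler_pM2r l_gt0).
have := f_concave x y1 y2 (ltW l_gt0) l_le1.
have -> : l *: y1 + (1 - l) *: y2 = y2 + l *: (y1 - y2).
  by rewrite scalerBr scalerBl scale1r addrCA.
have := f_taylor_y x y2 (l *: (y1 - y2)); rewrite ler_norml => /andP[_].
rewrite dotpZr enormZ (ger0_norm (ltW l_gt0)) exprMn; lra.
Qed.

Lemma dfun_ge_y y y' z :
  dotp (gy (xo y z) y) (y' - y) - L * kappa * enorm (y' - y) ^+ 2 <= dd y' z - dd y z.
Proof.
have [_ xo_min] := xoptP y z; have [X' _] := xoptP y' z.
have := xo_min _ X'; rewrite /dfun /Kfun.
have := f_concave_grad (xo y' z) y y'; rewrite -[y - y']opprB dotpNr.
have := norm_dotp_le (gy (xo y' z) y' - gy (xo y z) y) (y' - y).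
rewrite dotpBl ler_norml => /andP[+ _].
have := ler_wpM2r (enorm_ge0 (y' - y)) (gy_lip (xo y' z) y' (xo y z) y).
suff : L * Num.sqrt (enorm (xo y' z - xo y z) ^+ 2 + enorm (y' - y) ^+ 2) * enorm (y' - y)
       <= L * kappa * enorm (y' - y) ^+ 2 by lra.
have [->|y'_neq] := eqVneq y' y; first by rewrite [y - y]subrr enorm0 mulr0 expr0n /= mulr0.
have L_ge0 := lip_const_ge0 y'_neq.
rewrite [in X in _ <= X]expr2 mulrA ler_wpM2r ?enorm_ge0 // -mulrA ler_wpM2l //.
rewrite -[X in _ <= _ * X](ger0_norm (enorm_ge0 (y' - y))).
exact/sqrt_add_sqr_le/xopt_move_le/enorm_ge0.
Qed.

Lemma dfun_le_y y y' z :
  dd y' z - dd y z - dotp (gy (xo y z) y) (y' - y) <= L / 2 * enorm (y' - y) ^+ 2.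
Proof.
have [X0 _] := xoptP y z; have [_ xo'_min] := xoptP y' z.
have := xo'_min _ X0; rewrite /dfun /Kfun.
have := f_taylor_y (xo y z) y (y' - y); rewrite subrKC ler_norml => /andP[_].
lra.
Qed.

Lemma dfun_ge_z y z z' :
  p / 2 * dotp (z' - z) (z' + z - 2%:R *: xo y z') <= dd y z' - dd y z.
Proof.
have [X' _] := xoptP y z'; have [_ xo_min] := xoptP y z.
have := xo_min _ X'; rewrite /dfun /Kfun -enorm_sqrB_sqrB; lra.
Qed.

(* Danskin: [d(., z)] is squeezed between two quadratic models at [y]. *)
Lemma dfun_differentiable y z :
  differentiable (fun y => dd y z) y /\
  forall v, 'd (fun y => dd y z) y v = dotp (gy (xo y z) y) v.
Proof.
apply: (@differentiable_of_enorm_remainder _ _ _ _ _ (`|L| / 2 + `|L * kappa|)) => u.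
have := dfun_ge_y y (y + u) z; have := dfun_le_y y (y + u) z.
have -> : y + u - y = u by rewrite addrC addKr.
set e := enorm u ^+ 2 => up lo.
have e_ge0 : 0 <= e by apply: sqr_ge0.
have := ler_wpM2r e_ge0 (ler_norm L); have := ler_wpM2r e_ge0 (ler_norm (L * kappa)).
have := mulr_ge0 (normr_ge0 L) e_ge0; have := mulr_ge0 (normr_ge0 (L * kappa)) e_ge0.
by rewrite ler_norml; lra.
Qed.

End SmoothedGDA.

Unset Implicit Arguments.

Theorem lemma7 (R : realType) (n m : nat)
  (X : set 'rV[R]_n) (Y : set 'rV[R]_m)
  (f : 'rV[R]_n -> 'rV[R]_m -> R)
  (gx : 'rV[R]_n -> 'rV[R]_m -> 'rV[R]_n)
  (gy : 'rV[R]_n -> 'rV[R]_m -> 'rV[R]_m)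
  (L p c alpha beta : R)
  (xs : nat -> 'rV[R]_n) (ys : nat -> 'rV[R]_m) (zs : nat -> 'rV[R]_n) :
  (* X nonempty closed convex; Y nonempty closed convex compact *)
  (exists x0, X x0) -> closed X -> convex_set X ->
  (exists y0, Y y0) -> closed Y -> convex_set Y -> compact Y ->
  (* f is differentiable with partial gradients gx, gy *)
  (forall (x : 'rV[R]_n) (y : 'rV[R]_m),
      differentiable (fun w : 'rV[R]_n * 'rV[R]_m => f w.1 w.2) (x, y) /\
      forall u v, 'd (fun w : 'rV[R]_n * 'rV[R]_m => f w.1 w.2) (x, y) (u, v)
                  = dotp (gx x y) u + dotp (gy x y) v) ->
  (* f(x,.) concave *)
  (forall x (y1 y2 : 'rV[R]_m) (l : R), 0 <= l -> l <= 1 ->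
      l * f x y1 + (1 - l) * f x y2 <= f x (l *: y1 + (1 - l) *: y2)) ->
  (* grad_x f and grad_y f are L-Lipschitz (Euclidean norm on R^n x R^m) *)
  (forall x y x' y',
      enorm (gx x y - gx x' y') <= L * Num.sqrt (enorm (x - x') ^+ 2 + enorm (y - y') ^+ 2)) ->
  (forall x y x' y',
      enorm (gy x y - gy x' y') <= L * Num.sqrt (enorm (x - x') ^+ 2 + enorm (y - y') ^+ 2)) ->
  L < p -> 0 < c -> 0 < alpha -> 0 < beta -> beta <= 1 ->
  (* Smoothed-GDA iterations *)
  (forall t, xs t.+1 = eproj X (xs t - c *: gradxK gx p (xs t) (zs t) (ys t))) ->
  (forall t, ys t.+1 = eproj Y (ys t + alpha *: gradyK gy (xs t.+1) (zs t) (ys t))) ->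
  (forall t, zs t.+1 = zs t + beta *: (xs t.+1 - zs t)) ->
  let sigma2 := 2 * (p + L) / (p - L) in
  let Ld := L + L * sigma2 in
  forall t : nat,
    (* grad_y K(x(y^t,z^t),z^t;y^t) = grad_y d(y^t,z^t) *)
    (differentiable (fun y => dfun f p X y (zs t)) (ys t) /\
     forall v, 'd (fun y => dfun f p X y (zs t)) (ys t) v
               = dotp (gradyK gy (xopt f p X (ys t) (zs t)) (zs t) (ys t)) v) /\
    dfun f p X (ys t.+1) (zs t.+1) - dfun f p X (ys t) (zs t) >=
      dotp (gradyK gy (xopt f p X (ys t) (zs t)) (zs t) (ys t)) (ys t.+1 - ys t)
      - Ld / 2 * enorm (ys t - ys t.+1) ^+ 2
      + p / 2 * dotp (zs t.+1 - zs t)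
                     (zs t.+1 + zs t - 2%:R *: xopt f p X (ys t.+1) (zs t.+1)).
Proof.
move=> X_nonempty X_closed X_convex _ _ _ _ f_diff f_concave gx_lip gy_lip L_lt_p
  _ _ _ _ _ _ _ sigma2 Ld t.
split; first exact: dfun_differentiable.
have := dfun_ge_y f_diff f_concave gx_lip gy_lip X_nonempty X_closed X_convex L_lt_p
  (ys t) (ys t.+1) (zs t).
have := dfun_ge_z f_diff gx_lip X_nonempty X_closed L_lt_p (ys t.+1) (zs t) (zs t.+1).
by rewrite /gradyK enormB /Ld /sigma2; lra.
Qed.
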